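(* Let $\mathbb{K}=\mathbb{R}$ or $\mathbb{C}$, let $V,W$ be finite-dimensional $\mathbb{K}$-vector spaces, and let $A(\xi):V\to W$, $\xi\in\mathbb{K}^d$, be a homogeneous symbol of degree $k$ (a $\operatorname{Lin}(V,W)$-valued map whose matrix entries are homogeneous polynomials of degree $k$ in $\xi$ with coefficients in $\mathbb{K}$). The following are equivalent: (1) there is an integer $r$ such that $\operatorname{rank}_{\mathbb K}A(\xi)=r$ for all $\xi\in\mathbb{K}^d\setminus\{0\}$; (2) there exist finite-dimensional $\mathbb{K}$-vector spaces $U,X$ and homogeneous symbols $B(\xi):U\to V$ and $Q(\xi):W\to X$ on $\mathbb{K}^d$ such that $\operatorname{im}B(\xi)=\ker A(\xi)$ and $\operatorname{im}A(\xi)=\ker Q(\xi)$ for all $\xi\in\mathbb{K}^d\setminus\{0\}$. Moreover, if (1) holds, then in (2) one can always take $B(\xi)$ and $Q(\xi)$ homogeneous of order $rk$. *)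

From HB Require Import structures.
From mathcomp Require Import all_boot all_order all_algebra.
From mathcomp Require Import mpoly.
From mathcomp Require Import reals.
From mathcomp Require Import complex.

Set Implicit Arguments.
Unset Strict Implicit.
Unset Printing Implicit Defensive.

Import GRing.Theory Num.Theory.
Local Open Scope ring_scope.

(* A symbol xi |-> A(xi) : K^n -> K^m on K^d is an m x n matrix whose
   entries are polynomials in d variables over K.  It acts on column vectors. *)
Definition symbol (K : fieldType) (d m n : nat) := 'M[{mpoly K[d]}]_(m, n).

Definition sym_eval (K : fieldType) (d m n : nat) (A : symbol K d m n)
  (xi : 'rV[K]_d) : 'M[K]_(m, n) :=
  map_mx (fun p : {mpoly K[d]} => p.@[fun i => xi 0 i]) A.

Definition homog_symbol (K : fieldType) (d m n : nat) (k : nat)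
  (A : symbol K d m n) : Prop :=
  forall i j, A i j \is k.-homog.

Definition im_eq_ker (K : fieldType) (p n m : nat)
  (B : 'M[K]_(n, p)) (A : 'M[K]_(m, n)) : Prop :=
  forall v : 'cV[K]_n, A *m v = 0 <-> exists u : 'cV[K]_p, v = B *m u.

Definition constant_rank (K : fieldType) (d m n : nat) (A : symbol K d m n)
  (r : nat) : Prop :=
  forall xi : 'rV[K]_d, xi != 0 -> \rank (sym_eval A xi) = r.

Definition exact_at_nonzero (K : fieldType) (d p n m q : nat)
  (B : symbol K d n p) (A : symbol K d m n) (Q : symbol K d q m) : Prop :=
  forall xi : 'rV[K]_d, xi != 0 ->
    im_eq_ker (sym_eval B xi) (sym_eval A xi) /\
    im_eq_ker (sym_eval A xi) (sym_eval Q xi).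

Definition theorem2p2_over (K : fieldType) : Prop :=
  forall (d n m k : nat) (A : symbol K d m n),
    homog_symbol k A ->
    ((exists r : nat, constant_rank A r) <->
     (exists (p q kB kQ : nat) (B : symbol K d n p) (Q : symbol K d q m),
        homog_symbol kB B /\ homog_symbol kQ Q /\ exact_at_nonzero B A Q))
    /\
    (forall r : nat, constant_rank A r ->
     exists (p q : nat) (B : symbol K d n p) (Q : symbol K d q m),
        homog_symbol (r * k) B /\ homog_symbol (r * k) Q /\
        exact_at_nonzero B A Q).

(* If rank A <= r, take r rows f and r + 1 columns g of A and border the
   f x g submatrix with an extra first row x.  The first-row cofactors of this
   square matrix, placed at the columns g, form a vector whose pairing with x
   is its determinant; with a row of A as x this is an (r+1)-minor of A, so the
   vector lies in ker A.  When the rows f carry an invertible r x r minor,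
   these vectors and the coordinate vectors of the minor's columns span K^n,
   so they span ker A if rank A = r.  Their entries are r-minors, so for a
   symbol of degree k and constant rank r they are the columns of a symbol B
   of degree rk with im B = ker A; Q is the transpose of the same
   construction for A^T.
   Conversely, im A = ker Q gives rank A(xi) + rank Q(xi) = dim W.  On a line
   through xi and eta avoiding 0, each rank is at most its generic value, with
   equality off the roots of a nonzero polynomial; since the sum is constant
   and K is infinite, both ranks are constant on the line.  When eta is a
   multiple of xi, homogeneity gives the same instead. *)

From HB Require Import structures.
From mathcomp Require Import all_boot all_order all_algebra.
From mathcomp Require Import mpoly.
From mathcomp Require Import reals.
From mathcomp Require Import complex.
From mathcomp Require Import perm.
From mathcomp Require Import ring zify.
From Stdlib Require Import Classical.

Set Implicit Arguments.
Unset Strict Implicit.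
Unset Printing Implicit Defensive.
Import GRing.Theory Num.Theory.
Local Open Scope ring_scope.

Section ImEqKer.
Variable K : fieldType.

Lemma trmx_sub_kermx m n p (A : 'M[K]_(m, n)) (M : 'M[K]_(n, p)) :
  (M^T <= kermx A^T)%MS = (A *m M == 0).
Proof. by rewrite sub_kermx -trmx_mul trmx_eq0. Qed.

Lemma im_eq_kerP m n p (M : 'M[K]_(n, p)) (A : 'M[K]_(m, n)) :
  im_eq_ker M A <-> (M^T == kermx A^T)%MS.
Proof.
split=> [imMA | /andP[sMK sKM] v].
  apply/andP; split; apply/row_subP => j.
    rewrite -tr_col sub_kermx -trmx_mul trmx_eq0; apply/eqP/(imMA _).2.
    by exists (delta_mx j 0); rewrite colE.
  have := row_sub j (kermx A^T); rewrite -[row j _]trmxK trmx_sub_kermx.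
  move=> /eqP/(imMA _).1 [u ->].
  by rewrite trmx_mul submxMl.
split=> [Av | [u ->]].
  have /submxP[D vD] : (v^T <= M^T)%MS.
    by apply: submx_trans sKM; rewrite trmx_sub_kermx Av.
  by exists D^T; rewrite -[v]trmxK vD trmx_mul trmxK.
by apply/eqP; rewrite -trmx_sub_kermx trmx_mul (submx_trans (submxMl _ _) sMK).
Qed.

Lemma im_eq_ker_rank m n p (M : 'M[K]_(n, p)) (A : 'M[K]_(m, n)) :
  im_eq_ker M A -> (\rank M + \rank A)%N = n.
Proof.
move/im_eq_kerP/eqmx_rank; rewrite mxrank_tr mxrank_ker mxrank_tr => ->.
by rewrite subnK // rank_leq_col.
Qed.

Lemma im_eq_ker_rankP m n p (M : 'M[K]_(n, p)) (A : 'M[K]_(m, n)) :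
  A *m M = 0 -> (n <= \rank M + \rank A)%N -> im_eq_ker M A.
Proof.
move=> AM0 rkMA; apply/im_eq_kerP.
have sMK : (M^T <= kermx A^T)%MS by rewrite trmx_sub_kermx AM0.
rewrite -(geq_leqif (mxrank_leqif_eq sMK)) mxrank_ker !mxrank_tr.
by rewrite leq_subLR addnC.
Qed.

End ImEqKer.

Section MinorKernel.
Variable R : comNzRingType.

Definition bordered_minor r m n (A : 'M[R]_(m, n)) (x : 'I_r.+1 -> R)
    (f : {ffun 'I_r -> 'I_m}) (g : {ffun 'I_r.+1 -> 'I_n}) : 'M[R]_r.+1 :=
  \matrix_(a, b) if unlift ord0 a is Some a' then A (f a') (g b) else x b.

Definition minor_ker_vec r m n (A : 'M[R]_(m, n)) (f : {ffun 'I_r -> 'I_m})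
    (g : {ffun 'I_r.+1 -> 'I_n}) : 'cV[R]_n :=
  \col_j \sum_(b < r.+1)
    (g b == j)%:R * cofactor (bordered_minor A (fun _ => 0) f g) ord0 b.

Definition minor_index r m n := ({ffun 'I_r -> 'I_m} * {ffun 'I_r.+1 -> 'I_n})%type.

Definition minor_ker_mx r m n (A : 'M[R]_(m, n)) :
    'M[R]_(n, #|{: minor_index r m n}|) :=
  \matrix_(j, k) minor_ker_vec A (enum_val k).1 (enum_val k).2 j 0.

Lemma cofactor0_bordered_minor r m n (A : 'M[R]_(m, n)) x y f g b :
  cofactor (bordered_minor A x f g) ord0 b =
  cofactor (@bordered_minor r m n A y f g) ord0 b.
Proof.
rewrite /cofactor; congr (_ * \det _).
by apply/matrixP => i j; rewrite !mxE liftK.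
Qed.

Lemma mulmx_minor_ker_vec r m n (A : 'M[R]_(m, n)) f g i :
  (A *m @minor_ker_vec r m n A f g) i 0 =
  \det (bordered_minor A (fun b => A i (g b)) f g).
Proof.
rewrite (expand_det_row _ ord0) mxE; under eq_bigr do rewrite mxE mulr_sumr.
rewrite exchange_big /=; apply: eq_bigr => b _.
rewrite (bigD1 (g b)) //= eqxx mul1r big1 ?addr0.
  by rewrite !mxE unlift_none (cofactor0_bordered_minor _ _ (fun _ => 0)).
by move=> j /negPf; rewrite eq_sym => ->; rewrite mul0r mulr0.
Qed.

Lemma col_minor_ker_mx r m n (A : 'M[R]_(m, n)) f g :
  col (enum_rank (f, g)) (minor_ker_mx r A) = minor_ker_vec A f g.
Proof. by apply/matrixP => i j; rewrite !mxE enum_rankK. Qed.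

End MinorKernel.

Lemma map_minor_ker_mx (R S : comNzRingType) (phi : {rmorphism R -> S}) r m n
    (A : 'M[R]_(m, n)) :
  map_mx phi (minor_ker_mx r A) = minor_ker_mx r (map_mx phi A).
Proof.
apply/matrixP => j k; rewrite !mxE rmorph_sum; apply: eq_bigr => b _.
rewrite rmorphM rmorph_nat -cofactor_map_mx; congr (_ * cofactor _ _ _).
apply/matrixP => i l; rewrite !mxE; case: (unlift _ _) => [a|].
  by rewrite mxE.
by rewrite rmorph0.
Qed.

Section MinorKernelField.
Variable K : fieldType.

Lemma im_eq_ker_tr m n p (M : 'M[K]_(n, p)) (A : 'M[K]_(m, n)) :
  im_eq_ker M A -> im_eq_ker A^T M^T.
Proof.
move=> /[dup] /im_eq_ker_rank rkMA /im_eq_kerP /andP[+ _].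
rewrite trmx_sub_kermx => /eqP AM0; apply: im_eq_ker_rankP.
  by rewrite -trmx_mul AM0 trmx0.
by rewrite !mxrank_tr addnC rkMA.
Qed.

Lemma mxrank_mxsub m n m' n' (f : 'I_m' -> 'I_m) (g : 'I_n' -> 'I_n)
    (A : 'M[K]_(m, n)) :
  (\rank (mxsub f g A) <= \rank A)%N.
Proof.
have -> : mxsub f g A = rowsub f 1%:M *m (A *m colsub g 1%:M).
  by rewrite mulmx_colsub mulmx1 -rowsubE; apply/matrixP => i j; rewrite !mxE.
exact: leq_trans (mxrankM_maxr _ _) (mxrankM_maxl _ _).
Qed.

Lemma unit_minor_rank r m n (f : 'I_r -> 'I_m) (g : 'I_r -> 'I_n)
    (A : 'M[K]_(m, n)) :
  mxsub f g A \in unitmx -> (r <= \rank A)%N.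
Proof. by move=> U; rewrite -{1}(mxrank_unit U) mxrank_mxsub. Qed.

Lemma ex_unit_minor m n (A : 'M[K]_(m, n)) :
  exists (f : {ffun 'I_(\rank A) -> 'I_m}) (h : {ffun 'I_(\rank A) -> 'I_n}),
    mxsub f h A \in unitmx.
Proof.
have rowsub_full : row_full (rowsub (maxrankfun A) A)^T.
  by rewrite /row_full mxrank_tr; apply: maxrowsub_free.
exists (maxrankfun A), (fullrankfun rowsub_full).
have -> : mxsub (maxrankfun A) (fullrankfun rowsub_full) A =
          (rowsub (fullrankfun rowsub_full) (rowsub (maxrankfun A) A)^T)^T.
  by apply/matrixP => i j; rewrite !mxE.
by rewrite unitmx_tr fullrowsub_unit.
Qed.

Lemma mulmx_minor_ker_mx r m n (A : 'M[K]_(m, n)) :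
  (\rank A <= r)%N -> A *m minor_ker_mx r A = 0.
Proof.
move=> rkA; apply/matrixP => i k; rewrite -[k]enum_valK [RHS]mxE.
case: (enum_val k) => f g.
transitivity ((A *m col (enum_rank (f, g)) (minor_ker_mx r A)) i 0).
  by rewrite colE mulmxA -colE !mxE.
rewrite col_minor_ker_mx mulmx_minor_ker_vec.
pose f' := [ffun a => if unlift ord0 a is Some a' then f a' else i].
have -> : bordered_minor A (fun b => A i (g b)) f g = mxsub f' g A.
  by apply/matrixP => a b; rewrite !mxE ffunE; case: (unlift _ _).
apply/eqP; apply: contraLR rkA => det_nz; rewrite -ltnNge.
by apply: (unit_minor_rank (f := f') (g := g)); rewrite unitmxE unitfE.
Qed.

Lemma delta_sub_minor_ker_mx r m n (A : 'M[K]_(m, n))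
    (f : {ffun 'I_r -> 'I_m}) (h : {ffun 'I_r -> 'I_n}) (j : 'I_n) :
  mxsub f h A \in unitmx ->
  ((delta_mx 0 j : 'rV[K]_n) <=
     (minor_ker_mx r A)^T + rowsub h (1%:M : 'M[K]_n))%MS.
Proof.
move=> U.
pose g : {ffun 'I_r.+1 -> 'I_n} :=
  [ffun b => if unlift ord0 b is Some b' then h b' else j].
pose c b := cofactor (bordered_minor A (fun _ => 0) f g) ord0 b.
have c0E : c ord0 = \det (mxsub f h A).
  rewrite /c /cofactor add0n expr0 mul1r; congr (\det _).
  by apply/matrixP => a b; rewrite !mxE liftK ffunE liftK.
have vE : (minor_ker_vec A f g)^T = c ord0 *: delta_mx 0 j
    + \sum_(b < r) c (lift ord0 b) *: delta_mx 0 (h b).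
  apply/matrixP => i l; rewrite !mxE summxE big_ord_recl ffunE unlift_none.
  rewrite (ord1 i) eqxx /= mulrC eq_sym; congr (_ + _).
  by apply: eq_bigr => b _; rewrite !mxE ffunE liftK eqxx /= mulrC eq_sym.
have c0_nz : c ord0 != 0 by rewrite c0E -unitfE -unitmxE.
have -> : delta_mx 0 j = (c ord0)^-1 *: (minor_ker_vec A f g)^T
    - (c ord0)^-1 *: \sum_(b < r) c (lift ord0 b) *: delta_mx 0 (h b).
  by rewrite vE scalerDr addrK scalerA mulVf ?scale1r.
apply: addmx_sub_adds.
  by apply: scalemx_sub; rewrite -col_minor_ker_mx tr_col row_sub.
rewrite -scaleNr; apply/scalemx_sub/summx_sub => b _; apply: scalemx_sub.
by rewrite -row1 -row_rowsub row_sub.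
Qed.

Lemma minor_ker_mx_rank r m n (A : 'M[K]_(m, n))
    (f : {ffun 'I_r -> 'I_m}) (h : {ffun 'I_r -> 'I_n}) :
  mxsub f h A \in unitmx -> (n <= \rank (minor_ker_mx r A) + r)%N.
Proof.
move=> U; have : (1%:M <= (minor_ker_mx r A)^T + rowsub h (1%:M : 'M[K]_n))%MS.
  by apply/row_subP => j; rewrite row1 (delta_sub_minor_ker_mx _ U).
move/mxrankS; rewrite mxrank1 => /leq_trans; apply.
apply: leq_trans (mxrank_adds_leqif _ _).1 _.
by rewrite mxrank_tr leq_add2l rank_leq_row.
Qed.

Lemma im_eq_ker_minor_ker_mx m n (A : 'M[K]_(m, n)) :
  im_eq_ker (minor_ker_mx (\rank A) A) A.
Proof.
have [f [h U]] := ex_unit_minor A.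
apply: im_eq_ker_rankP; first exact: mulmx_minor_ker_mx.
exact: minor_ker_mx_rank U.
Qed.

Lemma im_eq_ker_minor_coker_mx m n (A : 'M[K]_(m, n)) :
  im_eq_ker A (minor_ker_mx (\rank A) A^T)^T.
Proof.
rewrite -mxrank_tr -[X in im_eq_ker X]trmxK.
exact/im_eq_ker_tr/im_eq_ker_minor_ker_mx.
Qed.

End MinorKernelField.

Section Homogeneous.
Variables (R : comNzRingType) (d k : nat).

Lemma dhomog_prod_uniform r (F : 'I_r -> {mpoly R[d]}) :
  (forall i, F i \is k.-homog) -> \prod_i F i \is (r * k).-homog.
Proof.
elim: r F => [|r IH] F homF; first by rewrite big_ord0 mul0n dhomog1.
by rewrite big_ord_recr /= mulSn addnC; apply: dhomogM; [apply: IH | apply: homF].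
Qed.

Lemma dhomog_det r (M : 'M[{mpoly R[d]}]_r) :
  (forall i j, M i j \is k.-homog) -> \det M \is (r * k).-homog.
Proof.
move=> homM; apply: rpred_sum => s _.
have := dhomog_prod_uniform (fun i => homM i (s i)).
by case: (odd_perm s); rewrite ?expr1 ?expr0 ?mulN1r ?mul1r ?rpredN.
Qed.

Lemma dhomog_cofactor r (M : 'M[{mpoly R[d]}]_r.+1) i j :
  (forall i j, M i j \is k.-homog) -> cofactor M i j \is (r * k).-homog.
Proof.
move=> homM; rewrite /cofactor -signr_odd.
have : \det (row' i (col' j M)) \is (r * k).-homog.
  by apply: dhomog_det => a b; rewrite !mxE.
by case: (odd _); rewrite ?expr1 ?expr0 ?mulN1r ?mul1r ?rpredN.
Qed.

Lemma dhomog_minor_ker_mx r m n (A : 'M[{mpoly R[d]}]_(m, n)) :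
  (forall i j, A i j \is k.-homog) ->
  forall i j, minor_ker_mx r A i j \is (r * k).-homog.
Proof.
move=> homA i j; rewrite !mxE; apply: rpred_sum => b _.
rewrite mulr_natl; apply/rpredMn/dhomog_cofactor => a c.
by rewrite mxE; case: (unlift _ _) => [a'|]; rewrite ?rpred0.
Qed.

End Homogeneous.

Section ConstantRankExact.
Variables (K : fieldType) (d : nat).

Lemma sym_eval_minor_ker_mx r m n (A : symbol K d m n) xi :
  sym_eval (minor_ker_mx r A) xi = minor_ker_mx r (sym_eval A xi).
Proof. exact: (map_minor_ker_mx (meval (fun i => xi 0 i))). Qed.

Lemma sym_eval_tr m n (A : symbol K d m n) xi :
  sym_eval (A^T : symbol K d n m) xi = (sym_eval A xi)^T.
Proof. by rewrite /sym_eval map_trmx. Qed.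

Lemma exact_of_constant_rank n m k r (A : symbol K d m n) :
  homog_symbol k A -> constant_rank A r ->
  exists (p q : nat) (B : symbol K d n p) (Q : symbol K d q m),
    homog_symbol (r * k) B /\ homog_symbol (r * k) Q /\ exact_at_nonzero B A Q.
Proof.
move=> homA rkA.
exists _, _, (minor_ker_mx r A), ((minor_ker_mx r (A^T : symbol K d n m))^T).
split; first exact: dhomog_minor_ker_mx.
split=> [i j | xi xi_nz].
  by rewrite mxE; apply: dhomog_minor_ker_mx => a b; rewrite mxE.
have -> : sym_eval (minor_ker_mx r (A^T : symbol K d n m))^T xi =
          (minor_ker_mx r (sym_eval A xi)^T)^T.
  by rewrite sym_eval_tr sym_eval_minor_ker_mx sym_eval_tr.
rewrite sym_eval_minor_ker_mx -(rkA xi xi_nz); split.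
  exact: im_eq_ker_minor_ker_mx.
exact: im_eq_ker_minor_coker_mx.
Qed.

End ConstantRankExact.

Lemma meval_dhomogZ (R : comNzRingType) d k (p : {mpoly R[d]}) c (v : 'I_d -> R) :
  p \is k.-homog -> p.@[fun i => c * v i] = c ^+ k * p.@[v].
Proof.
move=> /dhomogP homp; rewrite !mevalE mulr_sumr big_seq [RHS]big_seq.
apply: eq_bigr => mm /homp mmk; rewrite mulrCA; congr (_ * _).
under eq_bigr do rewrite exprMn.
by rewrite big_split /= prodrXr -mdegE mmk.
Qed.

Lemma sym_evalZ (K : fieldType) d m n k (A : symbol K d m n) c xi :
  homog_symbol k A -> sym_eval A (c *: xi) = c ^+ k *: sym_eval A xi.
Proof.
move=> homA; apply/matrixP => i j; rewrite !mxE -meval_dhomogZ //.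
by apply: meval_eq => l; rewrite mxE.
Qed.

Definition line_poly (R : comNzRingType) d (p : {mpoly R[d]}) (v w : 'I_d -> R) :
    {poly R} :=
  \sum_(mm <- msupp p) (p@_mm)%:P * \prod_i ((v i)%:P + 'X * (w i)%:P) ^+ (mm i).

Lemma horner_line_poly (R : comNzRingType) d (p : {mpoly R[d]}) v w t :
  (line_poly p v w).[t] = p.@[fun i => v i + t * w i].
Proof.
rewrite -horner_evalE rmorph_sum mevalE; apply: eq_bigr => mm _.
rewrite rmorphM rmorph_prod /= horner_evalE hornerC; congr (_ * _).
apply: eq_bigr => i _; rewrite rmorphXn /= horner_evalE.
by rewrite hornerD hornerM hornerX !hornerC.
Qed.

Lemma ex_max_bounded (T : Type) (F : T -> nat) (t0 : T) N :
  (forall t, (F t <= N)%N) -> exists t1, forall t, (F t <= F t1)%N.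
Proof.
elim: N => [|N IH] leFN; first by exists t0 => t; apply: leq_trans (leFN t) _.
have [[t1 Ft1] | noN] := classic (exists t1, F t1 = N.+1).
  by exists t1 => t; rewrite Ft1.
apply: IH => t; move: (leFN t); rewrite leq_eqVlt ltnS => /orP[/eqP FtN|//].
by case: noN; exists t.
Qed.

Lemma ex_nonroot (K : numFieldType) (p : {poly K}) :
  p != 0 -> exists t, ~~ root p t.
Proof.
move=> p_nz; pose s : seq K := [seq i%:R | i <- iota 0 (size p)].
have /hasP[t _ p_t] : has (predC (root p)) s.
  rewrite has_predC; apply/negP => roots_s.
  have uniq_s : uniq s.
    by rewrite map_inj_uniq ?iota_uniq //; apply: (mulrIn (@oner_neq0 K)).
  by have := max_poly_roots p_nz roots_s uniq_s; rewrite size_map size_iota ltnn.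
by exists t.
Qed.

Lemma generic_rank_poly_mx (K : fieldType) m n (P : 'M[{poly K}]_(m, n)) :
  exists s (D : {poly K}), [/\ D != 0,
    forall t, (\rank (map_mx (horner_eval t) P) <= s)%N &
    forall t, ~~ root D t -> \rank (map_mx (horner_eval t) P) = s].
Proof.
have [t1 maxt1] := @ex_max_bounded K (fun t => \rank (map_mx (horner_eval t) P))
   0 n (fun t => rank_leq_col _).
have [f [h U]] := ex_unit_minor (map_mx (horner_eval t1) P).
pose D := \det (mxsub f h P).
have DE t : D.[t] = \det (mxsub f h (map_mx (horner_eval t) P)).
  by rewrite -horner_evalE -det_map_mx map_mxsub.
exists (\rank (map_mx (horner_eval t1) P)), D; split=> // [|t Dt].
  by apply: contraTneq U => D0; rewrite unitmxE unitfE -DE D0 horner0 eqxx.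
apply/eqP; rewrite eqn_leq maxt1 /=.
by apply: (unit_minor_rank (f := f) (g := h)); rewrite unitmxE unitfE -DE.
Qed.

Lemma horner_rank_const (K : numFieldType) m n m' n' s
    (P : 'M[{poly K}]_(m, n)) (P' : 'M[{poly K}]_(m', n')) :
  (forall t, \rank (map_mx (horner_eval t) P) +
             \rank (map_mx (horner_eval t) P') = s)%N ->
  forall t t', \rank (map_mx (horner_eval t) P) = \rank (map_mx (horner_eval t') P).
Proof.
move=> rk_sum.
have [sP [D [D_nz leP genP]]] := generic_rank_poly_mx P.
have [sP' [D' [D'_nz leP' genP']]] := generic_rank_poly_mx P'.
have [t0] := ex_nonroot (mulf_neq0 D_nz D'_nz).
rewrite rootM negb_or => /andP[/genP rkP /genP' rkP'].
suff rkPE t : \rank (map_mx (horner_eval t) P) = sP by move=> t t'; rewrite !rkPE.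
have := rk_sum t0; have := rk_sum t; have := leP t; have := leP' t.
(* The rank terms differ in hidden instance paths: generalize them for lia. *)
rewrite rkP rkP'; move: (\rank _) (\rank _) => a b; lia.
Qed.

Lemma sym_eval_line (K : fieldType) d m n (M : symbol K d m n)
    (xi eta : 'rV[K]_d) t :
  map_mx (horner_eval t)
    (map_mx (fun p => line_poly p (fun i => xi 0 i) (fun i => eta 0 i)) M) =
  sym_eval M (xi + t *: eta).
Proof.
apply/matrixP => i j; rewrite !mxE horner_evalE horner_line_poly.
by apply: meval_eq => l; rewrite !mxE.
Qed.

Lemma line_neq0 (K : fieldType) d (xi eta : 'rV[K]_d) t :
  xi != 0 -> ~ (exists c, eta = c *: xi) -> xi + t *: (eta - xi) != 0.
Proof.
move=> xi_nz nonpar; apply/eqP => line0.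
have t_nz : t != 0.
  by apply: contraNneq xi_nz => t0; rewrite -line0 t0 scale0r addr0.
apply: nonpar; exists (1 - t^-1); apply/matrixP => i j.
move/matrixP: line0 => /(_ i j); rewrite !mxE => line0_ij.
have -> : eta i j = (1 - t^-1) * xi i j + t^-1 * (xi i j + t * (eta i j - xi i j)).
  by field.
by rewrite line0_ij mulr0 addr0.
Qed.

Lemma constant_rank_of_exact (K : numFieldType) d n m q k
    (A : symbol K d m n) (Q : symbol K d q m) :
  homog_symbol k A ->
  (forall xi, xi != 0 -> im_eq_ker (sym_eval A xi) (sym_eval Q xi)) ->
  exists r, constant_rank A r.
Proof.
move=> homA exactA.
have [[xi0 xi0_nz] | all0] := classic (exists xi0 : 'rV[K]_d, xi0 != 0); last first.
  by exists 0%N => xi xi_nz; case: all0; exists xi.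
exists (\rank (sym_eval A xi0)) => xi xi_nz.
have [[c xi0E] | nonpar] := classic (exists c, xi0 = c *: xi).
  have c_nz : c != 0 by apply: contraNneq xi0_nz => c0; rewrite xi0E c0 scale0r.
  by rewrite xi0E (sym_evalZ _ _ homA) mxrank_scale_nz // expf_neq0.
pose lp p := line_poly p (fun i => xi 0 i) (fun i => (xi0 - xi) 0 i).
have rk_sum t : (\rank (map_mx (horner_eval t) (map_mx lp A)) +
                 \rank (map_mx (horner_eval t) (map_mx lp Q)))%N = m.
  by rewrite !sym_eval_line; apply/im_eq_ker_rank/exactA/line_neq0.
have := horner_rank_const rk_sum 0 1.
by rewrite !sym_eval_line scale0r addr0 scale1r addrC subrK.
Qed.

Lemma numField_theorem2p2_over (K : numFieldType) : theorem2p2_over K.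
Proof.
move=> d n m k A homA; split=> [|r]; last exact: exact_of_constant_rank.
split=> [[r rkA] | [p [q [kB [kQ [B [Q [_ [_ exactBAQ]]]]]]]]].
  have [p [q [B [Q [homB [homQ exactBAQ]]]]]] := exact_of_constant_rank homA rkA.
  by exists p, q, (r * k)%N, (r * k)%N, B, Q.
by apply: (constant_rank_of_exact (Q := Q) homA) => xi /exactBAQ[].
Qed.

Theorem theorem2p2 (R : realType) :
  theorem2p2_over R /\ theorem2p2_over (R[i])%C.
Proof. by split; apply: numField_theorem2p2_over. Qed.
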